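(* Let $m\ge1$, $n\ge1$, $N>2n$, let $\Sigma_0,\dots,\Sigma_n\in\mathbb R^{m\times m}$ and let $\mathbf T_n$ be the block-Toeplitz matrix whose $(i,j)$ block ($i,j=0,\dots,n$) is $\Sigma_{i-j}$ if $i\ge j$ and $\Sigma_{j-i}^\top$ if $i<j$. Let $(\Lambda_k,\Theta_k)$, $k\ge1$, be a bounded sequence in $\mathcal L_+$ such that $A(\Lambda_k,\Theta_k)$ converges to a singular matrix. Then $J(\Lambda_k,\Theta_k)\to\infty$, where $J(\Lambda,\Theta)=\operatorname{Tr}(\Lambda\mathbf T_n)-\log\det A(\Lambda,\Theta)$.
   Context: $\mathfrak S_k$ denotes the space of real symmetric $mk\times mk$ matrices. $E_n$ is the $mN\times m(n+1)$ matrix with $N\times(n+1)$ blocks of size $m\times m$ whose $(i,i)$ blocks ($i=1,\dots,n+1$) are $I_m$ and other blocks $0$. $\mathbf U_N$ is the $mN\times mN$ block shift matrix whose $(i,i+1)$ blocks ($i=1,\dots,N-1$) and $(N,1)$ block are $I_m$, others $0$. The linear map $A:\mathfrak S_{n+1}\times\mathfrak S_N\to\mathfrak S_N$ is $A(\Lambda,\Theta)=E_n\Lambda E_n^\top+\mathbf U_N\Theta\mathbf U_N^\top-\Theta$, and $\mathcal L_+=\{(\Lambda,\Theta)\in(\ker A)^\perp:A(\Lambda,\Theta)>0\}$, orthogonality being with respect to $\langle(\Lambda_1,\Theta_1),(\Lambda_2,\Theta_2)\rangle=\operatorname{Tr}(\Lambda_1\Lambda_2)+\operatorname{Tr}(\Theta_1\Theta_2)$.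 *)

From HB Require Import structures.
From mathcomp Require Import all_boot all_order all_algebra.
From mathcomp Require Import all_classical all_reals all_analysis.
Set Implicit Arguments. Unset Strict Implicit. Unset Printing Implicit Defensive.
Import Order.TTheory GRing.Theory Num.Theory.
Local Open Scope ring_scope.

Definition symmx (R : ringType) (p : nat) (M : 'M[R]_p) : Prop := M^T = M.

Definition posdef (R : realType) (p : nat) (M : 'M[R]_p) : Prop :=
  symmx M /\ forall x : 'cV[R]_p, x != 0 -> 0 < (x^T *m M *m x) 0 0.

(* E_n : mN x m(n+1), (i,i) blocks I_m (i = 1..n+1), others 0 *)
Definition Emx (R : ringType) (m n N : nat) : 'M[R]_(m * N, m * n.+1) :=
  \matrix_(r, c) ((nat_of_ord r == nat_of_ord c)%:R).

(* U_N : mN x mN block cyclic shift: (i,i+1) blocks and (N,1) block are I_m *)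
Definition Umx (R : ringType) (m N : nat) : 'M[R]_(m * N) :=
  \matrix_(r, c) ((nat_of_ord c == (nat_of_ord r + m) %% (m * N))%N%:R).

Definition Aop (R : ringType) (m n N : nat)
    (L : 'M[R]_(m * n.+1)) (Th : 'M[R]_(m * N)) : 'M[R]_(m * N) :=
  Emx R m n N *m L *m (Emx R m n N)^T + Umx R m N *m Th *m (Umx R m N)^T - Th.

Definition ip (R : ringType) (m n N : nat)
    (L1 : 'M[R]_(m * n.+1)) (T1 : 'M[R]_(m * N))
    (L2 : 'M[R]_(m * n.+1)) (T2 : 'M[R]_(m * N)) : R :=
  \tr (L1 *m L2) + \tr (T1 *m T2).

Definition in_kerA_perp (R : ringType) (m n N : nat)
    (L : 'M[R]_(m * n.+1)) (Th : 'M[R]_(m * N)) : Prop :=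
  symmx L /\ symmx Th /\
  forall (L' : 'M[R]_(m * n.+1)) (T' : 'M[R]_(m * N)),
    symmx L' -> symmx T' -> Aop L' T' = 0 -> ip L Th L' T' = 0.

Definition Lplus (R : realType) (m n N : nat)
    (L : 'M[R]_(m * n.+1)) (Th : 'M[R]_(m * N)) : Prop :=
  in_kerA_perp L Th /\ posdef (Aop L Th).

(* entry (a,b) of M : 'M_m given nat indices (0 outside range, never used) *)
Definition nat_entry (R : ringType) (m : nat) (M : 'M[R]_m) (a b : nat) : R :=
  match @insub _ (fun k => (k < m)%N) 'I_m a, @insub _ (fun k => (k < m)%N) 'I_m b with
  | Some i, Some j => M i j
  | _, _ => 0
  end.

(* block-Toeplitz T_n: block (i,j) (i,j = 0..n) is Sigma_{i-j} if i >= j,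
   Sigma_{j-i}^T if i < j.  Row index r = i*m + a with i = r %/ m, a = r %% m. *)
Definition Tmx (R : ringType) (m n : nat) (Sig : 'I_n.+1 -> 'M[R]_m)
    : 'M[R]_(m * n.+1) :=
  \matrix_(r, c)
    (let i := (nat_of_ord r %/ m)%N in let a := (nat_of_ord r %% m)%N in
     let j := (nat_of_ord c %/ m)%N in let b := (nat_of_ord c %% m)%N in
     if (j <= i)%N then nat_entry (Sig (inord (i - j))) a b
     else nat_entry ((Sig (inord (j - i)))^T) a b).

Definition Jfun (R : realType) (m n N : nat) (Sig : 'I_n.+1 -> 'M[R]_m)
    (L : 'M[R]_(m * n.+1)) (Th : 'M[R]_(m * N)) : R :=
  \tr (L *m Tmx Sig) - ln (\det (Aop L Th)).

From HB Require Import structures.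
From mathcomp Require Import all_boot all_order all_algebra.
From mathcomp Require Import all_classical all_reals all_analysis.
From mathcomp Require Import polyrcf.
From mathcomp Require Import lra.
Set Implicit Arguments. Unset Strict Implicit. Unset Printing Implicit Defensive.
Import Order.TTheory GRing.Theory Num.Theory numFieldNormedType.Exports.
Local Open Scope classical_set_scope.
Local Open Scope ring_scope.

(* The determinants det A(Lambda_k, Theta_k) are positive and, by continuity
   of the determinant, tend to 0, so -log det A(Lambda_k, Theta_k) -> +oo,
   while Tr(Lambda_k T_n) stays bounded because Lambda_k does.  Positivity of
   the determinant of a matrix M with positive quadratic form: every matrix
   (1 - t) I + t M, 0 <= t <= 1, also has a positive quadratic form, hence is
   nonsingular, so the polynomial t |-> det((1 - t) I + t M) has no root on
   [0, 1] and keeps there the sign of its value 1 at t = 0. *)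

Definition pos_quadratic (R : numDomainType) p (M : 'M[R]_p) : Prop :=
  forall x : 'cV[R]_p, x != 0 -> 0 < (x^T *m M *m x) 0 0.

Lemma mulmx_tr_gt0 (R : realDomainType) p (v : 'rV[R]_p) :
  v != 0 -> 0 < (v *m v^T) 0 0.
Proof.
move=> v0; rewrite mxE.
have [/existsP[j vj0]|/existsPn v_eq0] := boolP [exists j, v 0 j != 0]; last first.
  case/eqP: v0; apply/matrixP => i j; rewrite !mxE (ord1 i).
  by apply/eqP; rewrite -[_ == _]negbK v_eq0.
rewrite (bigD1 j) //= mxE; apply: ltr_pwDl.
  by rewrite lt0r mulf_neq0 //= -expr2 sqr_ge0.
by apply: sumr_ge0 => i _; rewrite mxE -expr2 sqr_ge0.
Qed.

Lemma pos_quadratic1 (R : realDomainType) p : pos_quadratic (1%:M : 'M[R]_p).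
Proof.
move=> x x0; rewrite mulmx1.
by have := @mulmx_tr_gt0 _ _ x^T; rewrite trmx_eq0 trmxK; apply.
Qed.

Lemma pos_quadratic_convex (R : realFieldType) p (A B : 'M[R]_p) (t : R) :
  pos_quadratic A -> pos_quadratic B -> 0 <= t <= 1 ->
  pos_quadratic ((1 - t) *: A + t *: B).
Proof.
move=> qA qB /andP[t0 t1] x x0.
rewrite mulmxDr mulmxDl -!scalemxAr -!scalemxAl mxE [X in X + _]mxE [X in _ + X]mxE.
have a0 := qA x x0; have b0 := qB x x0.
nra.
Qed.

Lemma pos_quadratic_det_neq0 (R : realDomainType) p (M : 'M[R]_p) :
  pos_quadratic M -> \det M != 0.
Proof.
move=> qM; apply/negP => /det0P[v v0 vM0].
have := qM v^T; rewrite trmx_eq0 trmxK vM0 mul0mx mxE ltxx.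
by move/(_ v0).
Qed.

Lemma pos_quadratic_det_gt0 (R : rcfType) p (M : 'M[R]_p) :
  pos_quadratic M -> 0 < \det M.
Proof.
move=> qM.
pose P : 'M[{poly R}]_p := \matrix_(i, j) ((1 - 'X) * (i == j)%:R + 'X * (M i j)%:P).
have detP t : (\det P).[t] = \det ((1 - t) *: 1%:M + t *: M).
  rewrite -horner_evalE -det_map_mx; congr (\det _); apply/matrixP => i j.
  rewrite !mxE /= horner_evalE !hornerE.
  by case: (i == j); rewrite ?mulr1n ?mulr0n ?hornerE ?mulr1 ?mulr0.
have noroot01 : {in `[0, 1], forall t, ~~ root (\det P) t}.
  move=> t; rewrite in_itv /= /root detP => t01.
  by apply: pos_quadratic_det_neq0; apply: pos_quadratic_convex => //;
    apply: pos_quadratic1.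
have := polyrN0_itv noroot01 (x := 1) (y := 0); rewrite !in_itv /= ler01 !lexx.
rewrite !detP subr0 subrr !scale1r !scale0r addr0 add0r det1 sgr1.
by move=> /(_ isT isT)/esym/eqP; rewrite sgr_cp0.
Qed.

Lemma det_cvg (R : numFieldType) p (A : nat -> 'M[R]_p) (B : 'M[R]_p) :
  (forall i j, (fun k => A k i j) @ \oo --> B i j) ->
  (fun k => \det (A k)) @ \oo --> \det B.
Proof.
move=> AB; apply: cvg_big => //; first exact: add_continuous.
move=> s _; apply: cvgM; first exact: cvg_cst.
by apply: cvg_big => //; exact: mul_continuous.
Qed.

Lemma norm_mxtrace_mul_le (R : numDomainType) p q
    (A : 'M[R]_(p, q)) (T : 'M[R]_(q, p)) (B : R) :
  (forall i j, `|A i j| <= B) -> `|\tr (A *m T)| <= \sum_i \sum_j B * `|T j i|.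
Proof.
move=> AB; apply: le_trans (ler_norm_sum _ _ _) _.
apply: ler_sum => i _; rewrite mxE; apply: le_trans (ler_norm_sum _ _ _) _.
by apply: ler_sum => j _; rewrite normrM ler_wpM2r.
Qed.

Lemma subr_ln_cvgy (R : realType) (f g : nat -> R) (C : R) :
  (forall k, - C <= f k) -> (forall k, 0 < g k) -> g @ \oo --> 0 ->
  (fun k => f k - ln (g k)) @ \oo --> +oo.
Proof.
move=> fC g0 g_cvg0; apply/cvgryPgt => A.
have [k0 _ gsmall] := proj1 (cvgrPdist_lt _ _) g_cvg0 _ (expR_gt0 (- (A + C))).
exists k0 => // k /gsmall /=; rewrite sub0r normrN gtr0_norm // => gk.
have : ln (g k) < - (A + C) by rewrite -[X in _ < X]expRK ltr_ln ?posrE ?expR_gt0.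
by have := fC k; lra.
Qed.

Theorem lemma5 (R : realType) (m n N : nat) (hm : (1 <= m)%N) (hn : (1 <= n)%N)
    (hN : (2 * n < N)%N) (Sig : 'I_n.+1 -> 'M[R]_m)
    (L : nat -> 'M[R]_(m * n.+1)) (Th : nat -> 'M[R]_(m * N))
    (Ainf : 'M[R]_(m * N)) :
  (forall k, Lplus (L k) (Th k)) ->
  (exists B : R, forall k,
     (forall i j, `|L k i j| <= B) /\ (forall i j, `|Th k i j| <= B)) ->
  (forall i j, (fun k => Aop (L k) (Th k) i j) @ \oo --> Ainf i j) ->
  \det Ainf = 0 ->
  (fun k => Jfun Sig (L k) (Th k)) @ \oo --> +oo.
Proof.
move=> Lplus_k [B bounded] A_cvg detAinf0.
apply: (@subr_ln_cvgy _ (fun k => \tr (L k *m Tmx Sig))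
  (fun k => \det (Aop (L k) (Th k))) (\sum_i \sum_j B * `|Tmx Sig j i|)).
- move=> k; have := norm_mxtrace_mul_le (Tmx Sig) (proj1 (bounded k)).
  by rewrite ler_norml => /andP[].
- by move=> k; apply: pos_quadratic_det_gt0; case: (Lplus_k k) => _ [].
- by rewrite -detAinf0; apply: det_cvg.
Qed.
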